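(* Fix $k\ge1$ and a $k$-tuple of skew shapes $\boldsymbol\mu$ of total size $n$. For every $\mathbf{T}\in\mathrm{SYT}(\boldsymbol\mu)$ and $1<i<n$, the filling $D_i(\mathbf{T})$ is again in $\mathrm{SYT}(\boldsymbol\mu)$, satisfies $\mathrm{dDes}(D_i(\mathbf{T}))=\mathrm{dDes}(\mathbf{T})$ and $\mathrm{dinv}(D_i(\mathbf{T}))=\mathrm{dinv}(\mathbf{T})$. In particular $D_i$ is a well-defined involution on $\mathrm{SYT}(\boldsymbol\mu)$ preserving the diagonal inversion number.
   Context: Diagrams use French convention: a cell $(a,b)\in\mathbb{Z}^2$ ($a$ column, $b$ row), content $c(a,b)=a-b$; skew shapes $\lambda/\mu$ are set differences of partition diagrams, not identified up to translation. A $k$-tuple of shapes is $\boldsymbol\mu=(\mu^{(0)},\dots,\mu^{(k-1)})$; its cells are the disjoint union of the cells of the components. $\mathrm{SYT}(\boldsymbol\mu)$ is the set of bijections $\mathbf{T}$ from the cells of $\boldsymbol\mu$ to $[n]$ increasing along rows (left to right) and columns (bottom to top) of each component. The shifted content of a cell $x$ of $\mu^{(i)}$ is $\tilde c(x)=k\,c(x)+i$. The content reading word $w(\mathbf{T})$ lists entries in increasing order of shifted content, cells of equal shifted content (one diagonal of one component) read southwest to northeast. $\mathrm{dInv}(\mathbf{T})=\{(x,y):0<\tilde c(y)-\tilde c(x)<k,\ \mathbf{T}(x)>\mathbf{T}(y)\}$, $\mathrm{dinv}(\mathbf{T})=|\mathrm{dInv}(\mathbf{T})|$, $\mathrm{dDes}(\mathbf{T})=\{(x,y):\tilde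 c(y)-\tilde c(x)=k,\ \mathbf{T}(x)>\mathbf{T}(y)\}$. For entries $a,b$, $\mathrm{dist}(a,b)$ is the absolute difference of shifted contents of their cells, and $\mathrm{dist}(i-1,i,i+1)$ is the maximum pairwise distance. On a word $w$ with distinct letters containing $i-1,i,i+1$: $d_i(w)=w$ if $i$ lies positionally between $i-1$ and $i+1$, otherwise $d_i$ swaps $i$ with whichever of $i\pm1$ is farther from $i$. The twisted involution $\tilde d_i(w)=w$ if $i$ lies between $i-1$ and $i+1$; otherwise, writing $abc$ for the subword of $w$ formed by $i-1,i,i+1$ in positional order, $\tilde d_i$ replaces it (in the same three positions) by $bca$ if $a=i$ and by $cab$ if $c=i$. Define $D_i(\mathbf{T})$ as the filling of the same cells whose reading word is $d_i(w(\mathbf{T}))$ if $\mathrm{dist}(i-1,i,i+1)>k$ in $\mathbf{T}$, and $\tilde d_i(w(\mathbf{T}))$ if $\mathrm{dist}(i-1,i,i+1)\le k$. *)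

From mathcomp Require Import all_boot all_order all_algebra.
Set Implicit Arguments. Unset Strict Implicit. Unset Printing Implicit Defensive.
Import Order.TTheory GRing.Theory Num.Theory.

(* A partition: a weakly decreasing sequence of positive parts.
   Its (French) diagram is {(a,b) | b < size lam, a < lam_b},
   a = column, b = row. *)
Definition is_partition (lam : seq nat) : bool :=
  sorted geq lam && all (fun x => 0 < x) lam.

Definition in_diagram (lam : seq nat) (a b : nat) : bool :=
  (b < size lam) && (a < nth 0 lam b).

(* A skew shape lam/mu is the set difference of the diagrams
   (not identified up to translation). *)
Definition skew_shape := (seq nat * seq nat)%type.

Definition is_skew_shape (s : skew_shape) : bool :=
  is_partition s.1 && is_partition s.2.

Definition in_skew (s : skew_shape) (a b : nat) : bool :=
  in_diagram s.1 a b && ~~ in_diagram s.2 a b.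

Definition cell := (nat * (nat * nat))%type.
Definition ccomp (c : cell) := c.1.
Definition ccol (c : cell) := c.2.1.
Definition crow (c : cell) := c.2.2.

Definition content (c : cell) : int := (Posz (ccol c) - Posz (crow c))%R.

Definition shcontent (k : nat) (c : cell) : int :=
  (Posz k * content c + Posz (ccomp c))%R.

Definition all_cells (sh : seq skew_shape) : seq cell :=
  flatten [seq
    [seq (i, ab) | ab <- [seq (a, b) |
        b <- iota 0 (size (nth ([::], [::]) sh i).1),
        a <- iota 0 (nth 0 (nth ([::], [::]) sh i).1 b)]
      & in_skew (nth ([::], [::]) sh i) ab.1 ab.2]
  | i <- iota 0 (size sh)].

(* content reading order: increasing shifted content; cells of equal shifted
   content (same diagonal of the same component) read southwest to
   northeast, i.e. by increasing row. *)
Definition read_le (k : nat) (c d : cell) : bool :=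
  (shcontent k c < shcontent k d)%R ||
  ((shcontent k c == shcontent k d) && (crow c <= crow d)).

Definition rcells (sh : seq skew_shape) : seq cell :=
  sort (read_le (size sh)) (all_cells sh).

Definition in_cells (sh : seq skew_shape) (c : cell) : bool := c \in all_cells sh.

(* fillings: functions from cells to nat (only values on cells matter) *)
Definition filling := cell -> nat.

Definition rword (sh : seq skew_shape) (T : filling) : seq nat :=
  map T (rcells sh).

Definition of_word (sh : seq skew_shape) (w : seq nat) : filling :=
  fun c => nth 0 w (index c (rcells sh)).

Definition SYT (sh : seq skew_shape) (T : filling) : Prop :=
  perm_eq (rword sh T) (iota 1 (size (rcells sh))) /\
  (forall x y, in_cells sh x -> in_cells sh y ->
     ccomp x = ccomp y -> crow x = crow y -> ccol x < ccol y -> T x < T y) /\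
  (forall x y, in_cells sh x -> in_cells sh y ->
     ccomp x = ccomp y -> ccol x = ccol y -> crow x < crow y -> T x < T y).

Definition cell_pairs (sh : seq skew_shape) : seq (cell * cell) :=
  [seq (x, y) | x <- rcells sh, y <- rcells sh].

Definition dInv (sh : seq skew_shape) (T : filling) : seq (cell * cell) :=
  [seq p <- cell_pairs sh |
     (0 < shcontent (size sh) p.2 - shcontent (size sh) p.1)%R &&
     (shcontent (size sh) p.2 - shcontent (size sh) p.1 < Posz (size sh))%R &&
     (T p.1 > T p.2)].

Definition dinv (sh : seq skew_shape) (T : filling) : nat := size (dInv sh T).

Definition dDes (sh : seq skew_shape) (T : filling) : seq (cell * cell) :=
  [seq p <- cell_pairs sh |
     (shcontent (size sh) p.2 - shcontent (size sh) p.1 == Posz (size sh))%R &&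
     (T p.1 > T p.2)].

Definition cell_of (sh : seq skew_shape) (T : filling) (v : nat) : cell :=
  nth (0, (0, 0)) (rcells sh) (index v (rword sh T)).

Definition dist (sh : seq skew_shape) (T : filling) (u v : nat) : int :=
  `|(shcontent (size sh) (cell_of sh T u) - shcontent (size sh) (cell_of sh T v))%R|%R.

Definition dist3 (sh : seq skew_shape) (T : filling) (i : nat) : int :=
  Num.max (dist sh T i.-1 i) (Num.max (dist sh T i i.+1) (dist sh T i.-1 i.+1)).

Definition between (w : seq nat) (i : nat) : bool :=
  let p := index i.-1 w in let q := index i w in let r := index i.+1 w in
  ((p < q) && (q < r)) || ((r < q) && (q < p)).

Definition posdist (m n : nat) : nat := maxn (m - n) (n - m).

Definition swap_letters (w : seq nat) (u v : nat) : seq nat :=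
  set_nth 0 (set_nth 0 w (index u w) v) (index v w) u.

Definition d_op (i : nat) (w : seq nat) : seq nat :=
  if between w i then w else
  let q := index i w in
  if posdist q (index i.-1 w) > posdist q (index i.+1 w)
  then swap_letters w i i.-1
  else swap_letters w i i.+1.

Definition td_op (i : nat) (w : seq nat) : seq nat :=
  if between w i then w else
  let ps := sort leq [:: index i.-1 w; index i w; index i.+1 w] in
  let p1 := nth 0 ps 0 in let p2 := nth 0 ps 1 in let p3 := nth 0 ps 2 in
  let a := nth 0 w p1 in let b := nth 0 w p2 in let c := nth 0 w p3 in
  if a == i then set_nth 0 (set_nth 0 (set_nth 0 w p1 b) p2 c) p3 a
  else if c == i then set_nth 0 (set_nth 0 (set_nth 0 w p1 c) p2 a) p3 b
  else w.

Definition D_op (sh : seq skew_shape) (i : nat) (T : filling) : filling :=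
  if (Posz (size sh) < dist3 sh T i)%R
  then of_word sh (d_op i (rword sh T))
  else of_word sh (td_op i (rword sh T)).

From mathcomp Require Import all_boot all_order all_algebra zify.
Set Implicit Arguments. Unset Strict Implicit. Unset Printing Implicit Defensive.
Import Order.TTheory GRing.Theory Num.Theory.

(* Unless i lies between i-1 and i+1 in the reading word (then D_i is the identity),
   D_i relabels the entries by a value permutation: the transposition of i with the
   positionally farther neighbour e when dist(i-1,i,i+1) > k, and the 3-cycle
   i -> m -> e -> i (m the middle letter) otherwise.  Entries differing by at most 2
   never lie on a common diagonal of a component (the cells between them would force
   a gap of at least 3), so the reading order of i-1, i, i+1 is the order of their
   shifted contents and dist(i-1,i,i+1) = |c~(e) - c~(i)|.  A value permutation only
   changes the relative order of the pairs it moves.  For the transposition these are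
   two cells more than k apart, while consecutive entries in a common row or column are
   exactly k apart and dDes, dInv only see pairs at distance at most k.  For the
   3-cycle the three cells lie in a window of width at most k, so no two share a row or
   column, and the two pairs involving m that are inversions are exchanged.  Applying
   the rule again restores the word, because i stays at an end of the three letters. *)

Lemma in_cellsE sh (c : cell) : in_cells sh c =
  (c.1 < size sh) && in_skew (nth ([::], [::]) sh c.1) c.2.1 c.2.2.
Proof.
case: c => i0 [a b] /=; rewrite /in_cells /all_cells.
apply/flattenP/andP => [[s /mapP [j] Hj -> /mapP [[a' b']]]|[Hi Hs]].
  rewrite mem_filter /= => /andP [Hsk _] [-> -> ->].
  by rewrite mem_iota /= in Hj; split.
eexists; first by apply/mapP; exists i0; rewrite ?mem_iota.
apply/mapP; exists (a, b) => //; rewrite mem_filter /= Hs /=.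
move: Hs; rewrite /in_skew /in_diagram => /andP [/andP [Hb Ha] _].
by apply/allpairsPdep; exists b, a; rewrite !mem_iota.
Qed.

Lemma mem_rcells sh c : (c \in rcells sh) = in_cells sh c.
Proof. by rewrite mem_sort. Qed.

Lemma eq_cell (x y : cell) : x.1 = y.1 -> x.2.1 = y.2.1 -> x.2.2 = y.2.2 -> x = y.
Proof. by case: x => a [b c]; case: y => a' [b' c'] /= -> -> ->. Qed.

Lemma sorted_geq_nth (l : seq nat) j j' : sorted geq l -> j <= j' -> j' < size l ->
  nth 0 l j' <= nth 0 l j.
Proof.
move=> Hs Hjj' Hj'.
have tr : transitive geq by move=> ? ? ? h1 h2; exact: leq_trans h2 h1.
have := @sorted_leq_nth _ geq tr (fun x => leqnn x) 0 l Hs j.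
by move/(_ j' _ _ Hjj'); apply; rewrite inE //; exact: leq_ltn_trans Hj'.
Qed.

Lemma in_skew_convex (s : skew_shape) a b a' b' a'' b'' :
  is_skew_shape s -> in_skew s a b -> in_skew s a' b' ->
  a <= a'' <= a' -> b <= b'' <= b' -> in_skew s a'' b''.
Proof.
case: s => lam mu; rewrite /is_skew_shape /is_partition /in_skew /in_diagram /=.
move=> /andP [/andP [Sl _] /andP [Sm _]] /andP [/andP [Hb Ha] Hm].
move=> /andP [/andP [Hb' Ha'] Hm'] /andP [Ha1 Ha2] /andP [Hb1 Hb2].
have Hb'' : b'' < size lam by apply: leq_ltn_trans Hb'.
rewrite Hb'' /=; apply/andP; split.
  apply: leq_ltn_trans Ha2 _; apply: leq_trans Ha' _; exact: sorted_geq_nth.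
apply/negP => /andP [Hbm Ham]; move/negP: Hm; apply; apply/andP.
have Hbm' : b < size mu by apply: leq_ltn_trans Hbm.
split => //; apply: leq_ltn_trans Ha1 _; apply: leq_trans Ham _; exact: sorted_geq_nth.
Qed.

Lemma in_cells_convex sh (x y : cell) a b : all is_skew_shape sh ->
  in_cells sh x -> in_cells sh y -> x.1 = y.1 ->
  x.2.1 <= a <= y.2.1 -> x.2.2 <= b <= y.2.2 -> in_cells sh (x.1, (a, b)).
Proof.
move=> Hall; rewrite !in_cellsE => /andP [Hx Sx] /andP [Hy Sy] E Ha Hb.
rewrite /= Hx /=; apply: (in_skew_convex _ Sx _ Ha Hb); first exact: (all_nthP _ Hall).
by rewrite E.
Qed.

Lemma read_le_trans k : transitive (read_le k).
Proof.
move=> y x z; rewrite /read_le => /orP [H1|/andP [/eqP E1 H1]] /orP [H2|/andP [/eqP E2 H2]].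
- by rewrite (lt_trans H1 H2).
- by rewrite -E2 H1.
- by rewrite E1 H2.
- by rewrite E1 E2 eqxx (leq_trans H1 H2) orbT.
Qed.

Lemma read_le_total k : total (read_le k).
Proof.
move=> x y; rewrite /read_le.
by case: (ltgtP (shcontent k x) (shcontent k y)) => //= _; exact: leq_total.
Qed.

Lemma shcontentE k (c : cell) :
  shcontent k c = (Posz k * (Posz c.2.1 - Posz c.2.2) + Posz c.1)%R.
Proof. by []. Qed.

Lemma eq_shcontent k (x y : cell) : x.1 < k -> y.1 < k -> shcontent k x = shcontent k y ->
  x.1 = y.1 /\ x.2.1 + y.2.2 = y.2.1 + x.2.2.
Proof.
rewrite !shcontentE => h1 h2 E.
have D : ((Posz x.2.1 - Posz x.2.2) - (Posz y.2.1 - Posz y.2.2) = 0)%R by nia.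
split; lia.
Qed.

Lemma shcontent_row k (x y : cell) : x.1 = y.1 -> x.2.2 = y.2.2 ->
  (shcontent k y - shcontent k x = Posz k * (Posz y.2.1 - Posz x.2.1))%R.
Proof. by rewrite !shcontentE => -> ->; lia. Qed.

Lemma shcontent_col k (x y : cell) : x.1 = y.1 -> x.2.1 = y.2.1 ->
  (shcontent k y - shcontent k x = Posz k * (Posz x.2.2 - Posz y.2.2))%R.
Proof. by rewrite !shcontentE => -> ->; lia. Qed.

Lemma shcontent_line_far k (x y : cell) : x != y -> x.1 = y.1 ->
  x.2.2 = y.2.2 \/ x.2.1 = y.2.1 -> (Posz k <= `|shcontent k y - shcontent k x|)%R.
Proof.
move=> ne e1 [e2|e2].
  rewrite shcontent_row //.
  have : x.2.1 <> y.2.1 by move=> e3; move/eqP: ne; apply; exact: eq_cell.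
  nia.
rewrite shcontent_col //.
have : x.2.2 <> y.2.2 by move=> e3; move/eqP: ne; apply; exact: eq_cell.
nia.
Qed.

Definition word_cell sh (w : seq nat) v : cell := nth (0, (0, 0)) (rcells sh) (index v w).

Section StandardTableau.
Variables (sh : seq skew_shape) (T : filling).
Hypotheses (Hall : all is_skew_shape sh) (HT : SYT sh T).

Lemma SYT_rword_uniq : uniq (rword sh T).
Proof. by case: HT => Hp _; rewrite (perm_uniq Hp) iota_uniq. Qed.

Lemma SYT_rcells_uniq : uniq (rcells sh).
Proof. exact: map_uniq SYT_rword_uniq. Qed.

Lemma SYT_mem_rword v : 0 < v <= size (rcells sh) -> v \in rword sh T.
Proof.
move=> /andP [h1 h2]; case: HT => Hp _.
by rewrite (perm_mem Hp) mem_iota h1 add1n ltnS.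
Qed.

Lemma SYT_inj x y : in_cells sh x -> in_cells sh y -> T x = T y -> x = y.
Proof.
rewrite -!mem_rcells => Hx Hy E.
have U := SYT_rword_uniq.
rewrite -(nth_index (0, (0, 0)) Hx) -(nth_index (0, (0, 0)) Hy); congr nth.
apply/eqP; rewrite -(nth_uniq 0 _ _ U) ?size_map ?index_mem //.
by rewrite !(nth_map (0, (0, 0))) ?index_mem // !nth_index // E.
Qed.

Lemma SYT_mono (x y : cell) : in_cells sh x -> in_cells sh y -> x.1 = y.1 ->
  x.2.1 <= y.2.1 -> x.2.2 <= y.2.2 -> x != y -> T x < T y.
Proof.
case: HT => _ [Hrow Hcol] Hx Hy E Ha Hb Hne.
case: (ltngtP x.2.2 y.2.2) Hb => // Hb _.
  have Hz : in_cells sh (x.1, (y.2.1, x.2.2)).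
    by apply: (in_cells_convex Hall Hx Hy E); rewrite ?Ha ?leqnn ?(ltnW Hb).
  apply: (@leq_ltn_trans (T (x.1, (y.2.1, x.2.2)))); last by apply: Hcol => //; rewrite /ccomp /= E.
  case: (ltngtP x.2.1 y.2.1) Ha => // Ha' _; first by apply: ltnW; apply: Hrow.
  by rewrite -Ha' -!surjective_pairing.
case: (ltngtP x.2.1 y.2.1) Ha => // Ha _; first exact: Hrow.
by move: Hne; rewrite (eq_cell E Ha Hb) eqxx.
Qed.

Lemma SYT_diag_gap (x y : cell) : in_cells sh x -> in_cells sh y -> x.1 = y.1 ->
  x.2.1 + y.2.2 = y.2.1 + x.2.2 -> x.2.2 < y.2.2 -> T x + 3 <= T y.
Proof.
move=> Hx Hy E Hc Hr.
have Ha : x.2.1 < y.2.1 by lia.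
set xr : cell := (x.1, (x.2.1.+1, x.2.2)); set xu : cell := (x.1, (x.2.1, x.2.2.+1)).
have Hxr : in_cells sh xr by apply: (in_cells_convex Hall Hx Hy E); lia.
have Hxu : in_cells sh xu by apply: (in_cells_convex Hall Hx Hy E); lia.
have neq (z z' : cell) : (z.2.1 != z'.2.1) || (z.2.2 != z'.2.2) -> z != z'.
  by apply: contraL => /eqP ->; rewrite !eqxx.
have h1 : T x < T xr by apply: SYT_mono => //=; try lia; apply: neq; rewrite /=; lia.
have h2 : T x < T xu by apply: SYT_mono => //=; try lia; apply: neq; rewrite /=; lia.
have h3 : T xr < T y by apply: SYT_mono => //=; try lia; apply: neq; rewrite /=; lia.
have h4 : T xu < T y by apply: SYT_mono => //=; try lia; apply: neq; rewrite /=; lia.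
have h5 : T xr != T xu by apply/eqP => /(SYT_inj Hxr Hxu) [] /=; lia.
lia.
Qed.

Lemma SYT_succ_rect (x y : cell) a b : in_cells sh x -> in_cells sh y -> x.1 = y.1 ->
  x.2.1 <= a <= y.2.1 -> x.2.2 <= b <= y.2.2 -> T y = (T x).+1 -> (a, b) = x.2 \/ (a, b) = y.2.
Proof.
move=> hx hy e1 ha hb eT.
have hz : in_cells sh (x.1, (a, b)) by apply: (in_cells_convex Hall hx hy e1).
case: (eqVneq (x.1, (a, b)) x) => [<- | nzx]; first by left.
case: (eqVneq (x.1, (a, b)) y) => [<- | nzy]; first by right.
have := SYT_mono hx hz erefl; have := SYT_mono hz hy e1; rewrite /=.
rewrite eq_sym in nzx; move=> /(_ _ _ nzy) H1 /(_ _ _ nzx) H2; lia.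
Qed.

Lemma SYT_succ_line_adjacent (x y : cell) : in_cells sh x -> in_cells sh y -> x.1 = y.1 ->
  x.2.2 = y.2.2 \/ x.2.1 = y.2.1 -> T y = (T x).+1 ->
  `|shcontent (size sh) y - shcontent (size sh) x|%R = Posz (size sh).
Proof.
move=> hx hy e1 e2 eT.
have ne : x != y by apply/eqP => exy; rewrite exy in eT; lia.
have ne' : y != x by rewrite eq_sym.
case: e2 => e2; [rewrite shcontent_row // | rewrite shcontent_col //].
- case: (ltngtP x.2.1 y.2.1) => h; last by move: ne; rewrite (eq_cell e1 h e2) eqxx.
    case: (SYT_succ_rect (a := x.2.1.+1) (b := x.2.2) hx hy e1 _ _ eT) => //;
      by [lia | move/(congr1 fst) => /=; lia].
  by have := SYT_mono hy hx (esym e1) (ltnW h) (eq_leq (esym e2)) ne'; lia.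
- case: (ltngtP x.2.2 y.2.2) => h; last by move: ne; rewrite (eq_cell e1 e2 h) eqxx.
    case: (SYT_succ_rect (a := x.2.1) (b := x.2.2.+1) hx hy e1 _ _ eT) => //;
      by [lia | move/(congr1 snd) => /=; lia].
  by have := SYT_mono hy hx (esym e1) (eq_leq (esym e2)) (ltnW h) ne'; lia.
Qed.

Lemma word_cellP v : v \in rword sh T ->
  in_cells sh (word_cell sh (rword sh T) v) /\ T (word_cell sh (rword sh T) v) = v.
Proof.
move=> hv; have hi : index v (rword sh T) < size (rcells sh) by rewrite -(size_map T) index_mem.
split; first by rewrite -mem_rcells mem_nth.
by rewrite /word_cell -(nth_map _ 0) // nth_index.
Qed.

Lemma shcontent_lt_index u v : u \in rword sh T -> v \in rword sh T ->
  index u (rword sh T) < index v (rword sh T) -> u <= v + 2 -> v <= u + 2 ->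
  (shcontent (size sh) (word_cell sh (rword sh T) u) <
   shcontent (size sh) (word_cell sh (rword sh T) v))%R.
Proof.
move=> hu hv huv uv vu.
have [hx Tx] := word_cellP hu; have [hy Ty] := word_cellP hv.
have hvs : index v (rword sh T) < size (rcells sh) by rewrite -(size_map T) index_mem.
have : read_le (size sh) (word_cell sh (rword sh T) u) (word_cell sh (rword sh T) v).
  apply: (sorted_ltn_nth (@read_le_trans _) _ (sort_sorted (@read_le_total _) _)) => //.
  by rewrite inE; exact: ltn_trans hvs.
move: hx hy Tx Ty; set x := word_cell _ _ u; set y := word_cell _ _ v => hx hy Tx Ty.
rewrite /read_le => /orP [//|/andP [/eqP E rr]]; exfalso.
move: (hx) (hy); rewrite !in_cellsE => /andP [cx _] /andP [cy _].
have [e1 e2] := eq_shcontent cx cy E.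
case: (ltngtP x.2.2 y.2.2) rr => // h _; first by have := SYT_diag_gap hx hy e1 e2 h; lia.
have exy : x = y by apply: eq_cell => //; lia.
by move: huv; rewrite -Tx -Ty exy ltnn.
Qed.
End StandardTableau.

Definition transp (u v x : nat) : nat := if x == u then v else if x == v then u else x.
Definition rot3 (a b c x : nat) : nat :=
  if x == a then b else if x == b then c else if x == c then a else x.

Lemma transpK u v : involutive (transp u v).
Proof. by move=> x; rewrite /transp; repeat case: eqP; lia. Qed.

Lemma transp_inj u v : injective (transp u v).
Proof. exact: inv_inj (transpK u v). Qed.

Lemma rot3K a b c : a != b -> b != c -> a != c -> cancel (rot3 a b c) (rot3 a c b).
Proof. by move=> /eqP ab /eqP bc /eqP ac x; rewrite /rot3; repeat case: eqP; lia. Qed.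

Lemma rot3_inj a b c : a != b -> b != c -> a != c -> injective (rot3 a b c).
Proof. by move=> ab bc ac; apply: can_inj (rot3K ab bc ac). Qed.

Lemma index_inj (w : seq nat) u v : u \in w -> v \in w -> index u w = index v w -> u = v.
Proof. by move=> hu hv E; rewrite -(nth_index 0 hu) -(nth_index 0 hv) E. Qed.

Lemma set_nth2_map (w : seq nat) j1 j2 y1 y2 g : uniq w -> j1 < size w -> j2 < size w ->
  y1 = g (nth 0 w j1) -> y2 = g (nth 0 w j2) ->
  (forall x, x \in w -> x != nth 0 w j1 -> x != nth 0 w j2 -> g x = x) ->
  set_nth 0 (set_nth 0 w j1 y1) j2 y2 = map g w.
Proof.
move=> U h1 h2 e1 e2 Hg.
apply: (@eq_from_nth _ 0); first by rewrite !size_set_nth size_map; lia.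
move=> m; rewrite !size_set_nth => Hm.
have Hm' : m < size w by move: Hm; lia.
rewrite (nth_map 0) // nth_set_nth /=; case: ifP => [/eqP-> // | /negbT n2].
rewrite nth_set_nth /=; case: ifP => [/eqP-> // | /negbT n1].
by rewrite Hg ?mem_nth ?nth_uniq.
Qed.

Lemma set_nth3_map (w : seq nat) j1 j2 j3 y1 y2 y3 g : uniq w ->
  j1 < size w -> j2 < size w -> j3 < size w ->
  y1 = g (nth 0 w j1) -> y2 = g (nth 0 w j2) -> y3 = g (nth 0 w j3) ->
  (forall x, x \in w -> x != nth 0 w j1 -> x != nth 0 w j2 -> x != nth 0 w j3 -> g x = x) ->
  set_nth 0 (set_nth 0 (set_nth 0 w j1 y1) j2 y2) j3 y3 = map g w.
Proof.
move=> U h1 h2 h3 e1 e2 e3 Hg.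
apply: (@eq_from_nth _ 0); first by rewrite !size_set_nth size_map; lia.
move=> m; rewrite !size_set_nth => Hm.
have Hm' : m < size w by move: Hm; lia.
rewrite (nth_map 0) // nth_set_nth /=; case: ifP => [/eqP-> // | /negbT n3].
rewrite nth_set_nth /=; case: ifP => [/eqP-> // | /negbT n2].
rewrite nth_set_nth /=; case: ifP => [/eqP-> // | /negbT n1].
by rewrite Hg ?mem_nth ?nth_uniq.
Qed.

Lemma swap_lettersE (w : seq nat) u v : uniq w -> u \in w -> v \in w ->
  swap_letters w u v = map (transp u v) w.
Proof.
move=> U hu hv; apply: set_nth2_map; rewrite ?index_mem ?nth_index //.
- by rewrite /transp eqxx.
- by rewrite /transp eqxx; case: eqP.
- by move=> x _ /negbTE xu /negbTE xv; rewrite /transp xu xv.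
Qed.

Lemma sort_leq3 (l : seq nat) x y z : x < y -> y < z -> perm_eq l [:: x; y; z] ->
  sort leq l = [:: x; y; z].
Proof.
move=> h1 h2 hp; apply: (sorted_eq leq_trans anti_leq).
- exact: (sort_sorted leq_total).
- by rewrite /= (ltnW h1) (ltnW h2).
- by rewrite perm_sort.
Qed.

Definition amid (a b c : nat) : bool := (a < b < c) || (c < b < a).

Lemma amidC a b c : amid c b a = amid a b c.
Proof. by rewrite /amid orbC. Qed.

Definition spread3 (a b c : int) : int :=
  Num.max `|a - b|%R (Num.max `|b - c|%R `|a - c|%R).

Lemma spread3_rev a b c : spread3 c b a = spread3 a b c.
Proof. rewrite /spread3; lia. Qed.

Lemma spread3_monotone (a b c : int) : (a < b < c)%R || (c < b < a)%R ->
  spread3 a b c = `|c - a|%R.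
Proof. rewrite /spread3; lia. Qed.

Definition word_shcontent sh (w : seq nat) v : int := shcontent (size sh) (word_cell sh w v).

Definition D_word sh i (w : seq nat) : seq nat :=
  if (Posz (size sh) < spread3 (word_shcontent sh w i.-1) (word_shcontent sh w i)
                              (word_shcontent sh w i.+1))%R
  then d_op i w else td_op i w.

Lemma D_opE sh i T : D_op sh i T = of_word sh (D_word sh i (rword sh T)).
Proof. by rewrite /D_op /D_word -fun_if. Qed.

Definition end_config i m e (w : seq nat) : Prop :=
  [/\ (m = i.-1 /\ e = i.+1) \/ (m = i.+1 /\ e = i.-1),
      i \in w, m \in w, e \in w & amid (index i w) (index m w) (index e w)].

Lemma end_config_exists i (w : seq nat) : 0 < i ->
  i.-1 \in w -> i \in w -> i.+1 \in w -> ~~ between w i ->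
  exists m e, end_config i m e w.
Proof.
move=> Hi w1 w2 w3 nb.
have d12 : index i.-1 w != index i w by apply/eqP => /(index_inj w1 w2); lia.
have d23 : index i w != index i.+1 w by apply/eqP => /(index_inj w2 w3); lia.
have d13 : index i.-1 w != index i.+1 w by apply/eqP => /(index_inj w1 w3); lia.
move: nb; rewrite /between => nb.
case: (boolP (amid (index i w) (index i.-1 w) (index i.+1 w))) => H.
  by exists i.-1, i.+1; split; auto.
exists i.+1, i.-1; split; auto; move: H nb d12 d23 d13; rewrite /amid; lia.
Qed.

Lemma end_config_neq i m e (w : seq nat) : 0 < i -> end_config i m e w ->
  [/\ i != m, m != e & i != e].
Proof. by move=> Hi [[[-> ->]|[-> ->]] _ _ _ _]; split; apply/eqP; lia. Qed.

Lemma D_word_end_config sh i m e (w : seq nat) : uniq w -> 0 < i -> end_config i m e w ->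
  D_word sh i w =
  if (Posz (size sh) < spread3 (word_shcontent sh w i) (word_shcontent sh w m)
                              (word_shcontent sh w e))%R
  then map (transp i e) w else map (rot3 i m e) w.
Proof.
move=> Uw Hi Hc; have [im me ie] := end_config_neq Hi Hc.
case: Hc => Hme wi wm we Hmid.
have si : index i w < size w by rewrite index_mem.
have sm : index m w < size w by rewrite index_mem.
have se : index e w < size w by rewrite index_mem.
have dm : index i w != index m w by apply: contra im => /eqP /(index_inj wi wm) ->.
have de : index m w != index e w by apply: contra me => /eqP /(index_inj wm we) ->.
have nb : between w i = false.
  by move: Hmid dm de; rewrite /between /amid; case: Hme => -[-> ->]; lia.
have perm : perm_eq [:: index i.-1 w; index i w; index i.+1 w] [:: index i w; index m w; index e w].
  by case: Hme => -[-> ->]; apply/permP => f /=; lia.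
rewrite /D_word /td_op nb.
have -> : spread3 (word_shcontent sh w i.-1) (word_shcontent sh w i) (word_shcontent sh w i.+1)
    = spread3 (word_shcontent sh w i) (word_shcontent sh w m) (word_shcontent sh w e).
  by case: Hme => -[-> ->]; rewrite /spread3; lia.
case: ifP => _.
  have -> : d_op i w = swap_letters w i e.
    move: Hmid dm de; rewrite /amid /d_op nb /posdist.
    by case: Hme => -[-> ->] Hmid' dm' de'; case: ifP => //; lia.
  exact: swap_lettersE.
have rot_fix x : x != i -> x != m -> x != e -> rot3 i m e x = x.
  by rewrite /rot3 => /negbTE -> /negbTE -> /negbTE ->.
case/orP: Hmid => /andP [lt1 lt2].
- rewrite (sort_leq3 lt1 lt2 perm) /= !nth_index // eqxx.
  apply: set_nth3_map; rewrite ?nth_index //; try by rewrite /rot3; repeat case: eqP; lia.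
  by move=> x _ ? ? ?; apply: rot_fix.
- rewrite (sort_leq3 lt1 lt2); last by apply: perm_trans perm _; apply/permP => f /=; lia.
  rewrite /= !nth_index // eq_sym (negbTE ie) eqxx.
  apply: set_nth3_map; rewrite ?nth_index //; try by rewrite /rot3; repeat case: eqP; lia.
  by move=> x _ ? ? ?; apply: rot_fix.
Qed.

Lemma amid_index_map (g : nat -> nat) (w : seq nat) a b c a' b' c' : injective g ->
  g a' = a -> g b' = b -> g c' = c ->
  amid (index a (map g w)) (index b (map g w)) (index c (map g w)) =
  amid (index a' w) (index b' w) (index c' w).
Proof. by move=> Hg <- <- <-; rewrite !index_map. Qed.

Lemma spread3_word_map sh (g : nat -> nat) (w : seq nat) a b c a' b' c' : injective g ->
  g a' = a -> g b' = b -> g c' = c ->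
  spread3 (word_shcontent sh (map g w) a) (word_shcontent sh (map g w) b)
          (word_shcontent sh (map g w) c) =
  spread3 (word_shcontent sh w a') (word_shcontent sh w b') (word_shcontent sh w c').
Proof. by move=> Hg <- <- <-; rewrite /word_shcontent /word_cell !index_map. Qed.

Lemma end_config_map_transp i m e (w : seq nat) : 0 < i -> end_config i m e w ->
  end_config i m e (map (transp i e) w).
Proof.
move=> Hi Hc; have [im me ie] := end_config_neq Hi Hc.
have gi : transp i e e = i by rewrite /transp eqxx eq_sym (negbTE ie).
have gm : transp i e m = m by rewrite /transp eq_sym (negbTE im) (negbTE me).
have ge : transp i e i = e by rewrite /transp eqxx.
case: Hc => Hme wi wm we Hmid; split => //.
- by apply/mapP; exists e; rewrite ?gi.
- by apply/mapP; exists m; rewrite ?gm.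
- by apply/mapP; exists i; rewrite ?ge.
- by rewrite (amid_index_map _ (@transp_inj i e) gi gm ge) amidC.
Qed.

Lemma end_config_map_rot3 i m e (w : seq nat) : 0 < i -> end_config i m e w ->
  end_config i e m (map (rot3 i m e) w).
Proof.
move=> Hi Hc; have [im me ie] := end_config_neq Hi Hc.
have gi : rot3 i m e e = i by rewrite /rot3; repeat case: eqP; lia.
have gm : rot3 i m e m = e by rewrite /rot3; repeat case: eqP; lia.
have ge : rot3 i m e i = m by rewrite /rot3 eqxx.
case: Hc => Hme wi wm we Hmid; split.
- by case: Hme => -[-> ->]; auto.
- by apply/mapP; exists e; rewrite ?gi.
- by apply/mapP; exists m; rewrite ?gm.
- by apply/mapP; exists i; rewrite ?ge.
- by rewrite (amid_index_map _ (rot3_inj im me ie) gi gm ge) amidC.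
Qed.

Lemma D_word_end_config_invol sh i m e (w : seq nat) : uniq w -> 0 < i -> end_config i m e w ->
  D_word sh i (D_word sh i w) = w.
Proof.
move=> Uw Hi Hc; have [im me ie] := end_config_neq Hi Hc.
rewrite (D_word_end_config _ Uw Hi Hc); case: ifP => B.
  have Hg := @transp_inj i e.
  have [gi gm ge] : [/\ transp i e e = i, transp i e m = m & transp i e i = e].
    by rewrite /transp; split; repeat case: eqP; lia.
  rewrite (D_word_end_config _ (etrans (map_inj_uniq Hg w) Uw) Hi (end_config_map_transp Hi Hc)).
  rewrite (spread3_word_map _ _ Hg gi gm ge) spread3_rev B.
  exact: (mapK (transpK i e : cancel _ (transp i e))).
have Hg := rot3_inj im me ie.
have [gi gm ge] : [/\ rot3 i m e e = i, rot3 i m e m = e & rot3 i m e i = m].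
  by rewrite /rot3; split; repeat case: eqP; lia.
rewrite (D_word_end_config _ (etrans (map_inj_uniq Hg w) Uw) Hi (end_config_map_rot3 Hi Hc)).
rewrite (spread3_word_map _ _ Hg gi gm ge) spread3_rev B.
exact: (mapK (rot3K im me ie)).
Qed.

Lemma D_word_between sh i (w : seq nat) : between w i -> D_word sh i w = w.
Proof. by move=> B; rewrite /D_word /d_op /td_op B if_same. Qed.

Lemma D_word_involutive sh i (w : seq nat) : uniq w -> 0 < i ->
  i.-1 \in w -> i \in w -> i.+1 \in w -> D_word sh i (D_word sh i w) = w.
Proof.
move=> Uw Hi w1 w2 w3; case: (boolP (between w i)) => [B | nB].
  by rewrite !D_word_between.
have [m [e Hc]] := end_config_exists Hi w1 w2 w3 nB.
exact: D_word_end_config_invol Uw Hi Hc.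
Qed.

Lemma of_word_rword sh T x : uniq (rcells sh) -> in_cells sh x -> of_word sh (rword sh T) x = T x.
Proof.
move=> U; rewrite -mem_rcells => Hx.
by rewrite /of_word /rword (nth_map (0,(0,0))) ?index_mem // nth_index.
Qed.

Lemma of_word_map sh T (g : nat -> nat) x : in_cells sh x ->
  of_word sh (map g (rword sh T)) x = g (T x).
Proof.
rewrite -mem_rcells => Hx.
rewrite /of_word /rword (nth_map 0) ?size_map ?index_mem //.
by rewrite (nth_map (0, (0, 0))) ?index_mem // nth_index.
Qed.

Lemma rword_of_word sh w : uniq (rcells sh) -> size w = size (rcells sh) ->
  rword sh (of_word sh w) = w.
Proof.
move=> U S; apply: (@eq_from_nth _ 0); first by rewrite size_map S.
move=> j; rewrite size_map => Hj.
by rewrite /rword (nth_map (0,(0,0))) // /of_word index_uniq.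
Qed.

Lemma SYT_ext sh T1 T2 : (forall x, in_cells sh x -> T1 x = T2 x) -> SYT sh T1 -> SYT sh T2.
Proof.
move=> E [Hp [Hr Hc]]; split; last split.
- have -> : rword sh T2 = rword sh T1.
    by apply/eq_in_map => x; rewrite mem_rcells => /E.
  exact: Hp.
- by move=> x y Hx Hy ? ? ?; rewrite -!E //; apply: Hr.
- by move=> x y Hx Hy ? ? ?; rewrite -!E //; apply: Hc.
Qed.

Lemma cell_pairsP sh (p : cell * cell) : p \in cell_pairs sh ->
  in_cells sh p.1 /\ in_cells sh p.2.
Proof.
by case/allpairsP => [[x y] [hx hy ->]]; rewrite -!mem_rcells.
Qed.

Lemma mem_cell_pairs sh (x y : cell) : in_cells sh x -> in_cells sh y -> (x, y) \in cell_pairs sh.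
Proof. by rewrite -!mem_rcells => hx hy; apply/allpairsP; exists (x, y). Qed.

Lemma dDes_ext sh T1 T2 : (forall x, in_cells sh x -> T1 x = T2 x) -> dDes sh T1 = dDes sh T2.
Proof.
move=> E; apply: eq_in_filter => p /cell_pairsP [h1 h2].
by rewrite !E.
Qed.

Lemma dinv_ext sh T1 T2 : (forall x, in_cells sh x -> T1 x = T2 x) -> dinv sh T1 = dinv sh T2.
Proof.
move=> E; rewrite /dinv /dInv; congr size; apply: eq_in_filter => p /cell_pairsP [h1 h2].
by rewrite !E.
Qed.

Lemma cell_pairs_uniq sh : uniq (rcells sh) -> uniq (cell_pairs sh).
Proof.
move=> U; apply: allpairs_uniq => //; case=> a b [c d] _ _ /= E; exact: E.
Qed.

Lemma eq_count_except (A : eqType) (s E : seq A) (P P' : pred A) : uniq s -> uniq E ->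
  {subset E <= s} -> (forall x, x \in s -> x \notin E -> P x = P' x) ->
  count P E = count P' E -> count P s = count P' s.
Proof.
move=> Us UE sub HP HE.
have split : forall (Q : pred A) (t : seq A),
    count Q t = count Q (filter (mem E) t) + count Q (filter (predC (mem E)) t).
  move=> Q; elim => // x t IH; rewrite /= IH.
  by case: (x \in E) => /=; case: (Q x) => /=; rewrite ?add0n ?addSn ?addnS.
have pe : perm_eq (filter (mem E) s) E.
  apply: uniq_perm; rewrite ?filter_uniq // => x; rewrite mem_filter /=.
  by apply/andP/idP => [[]|h] //; split => //; apply: sub.
rewrite (split P s) (split P' s) !(permP pe) HE; congr addn.
apply: eq_in_count => x; rewrite mem_filter /= => /andP [h1 h2]; exact: HP.
Qed.

Definition dinv_pair (sh : seq skew_shape) (T : filling) (p : cell * cell) : bool :=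
  [&& (0 < shcontent (size sh) p.2 - shcontent (size sh) p.1)%R,
      (shcontent (size sh) p.2 - shcontent (size sh) p.1 < Posz (size sh))%R &
      (T p.1 > T p.2)].

Lemma dinvE sh T : dinv sh T = count (dinv_pair sh T) (cell_pairs sh).
Proof.
rewrite /dinv /dInv size_filter; apply: eq_count => p; by rewrite /dinv_pair andbA.
Qed.

Definition flipped (g : nat -> nat) (a b : nat) : bool := (a < b) != (g a < g b).

Section Relabel.
Variables (sh : seq skew_shape) (T : filling) (g : nat -> nat).
Hypotheses (HT : SYT sh T) (Hg : injective g).
Hypothesis Hgw : forall x, x \in rword sh T -> g x \in rword sh T.

Lemma SYT_relabel :
  (forall x y, in_cells sh x -> in_cells sh y -> flipped g (T x) (T y) ->
     ~ (x.1 = y.1 /\ (x.2.2 = y.2.2 \/ x.2.1 = y.2.1))) ->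
  SYT sh (g \o T).
Proof.
move=> H; have [Hp [Hr Hc]] := HT; split; last split.
- rewrite /rword map_comp; apply: perm_trans Hp.
  have U' : uniq (map g (rword sh T)) by rewrite map_inj_uniq // (SYT_rword_uniq HT).
  have sub : {subset map g (rword sh T) <= rword sh T} by move=> x /mapP [y hy ->]; apply: Hgw.
  have [_ eqm] := uniq_min_size U' sub (eq_leq (esym (size_map g (rword sh T)))).
  by apply: uniq_perm; rewrite ?(SYT_rword_uniq HT).
- move=> x y hx hy E1 E2 E3; have lt := Hr x y hx hy E1 E2 E3.
  case: (ltngtP (g (T x)) (g (T y))) => // [gt | /Hg eq]; last by rewrite eq ltnn in lt.
  by case: (H x y hx hy); [rewrite /flipped lt ltnNge (ltnW gt) | split; auto].
- move=> x y hx hy E1 E2 E3; have lt := Hc x y hx hy E1 E2 E3.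
  case: (ltngtP (g (T x)) (g (T y))) => // [gt | /Hg eq]; last by rewrite eq ltnn in lt.
  by case: (H x y hx hy); [rewrite /flipped lt ltnNge (ltnW gt) | split; auto].
Qed.

Lemma dDes_relabel :
  (forall x y, in_cells sh x -> in_cells sh y -> flipped g (T y) (T x) ->
     (shcontent (size sh) y - shcontent (size sh) x != Posz (size sh))%R) ->
  dDes sh (g \o T) = dDes sh T.
Proof.
move=> H; apply: eq_in_filter => -[x y] /cell_pairsP [hx hy] /=.
case: (boolP (flipped g (T y) (T x))) => [fl | /negPn /eqP -> //].
by rewrite (negbTE (H x y hx hy fl)).
Qed.

Lemma dinv_relabel (E : seq (cell * cell)) : uniq E -> {subset E <= cell_pairs sh} ->
  (forall p, p \in cell_pairs sh -> p \notin E -> dinv_pair sh (g \o T) p = dinv_pair sh T p) ->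
  count (dinv_pair sh (g \o T)) E = count (dinv_pair sh T) E ->
  dinv sh (g \o T) = dinv sh T.
Proof.
move=> UE sub HP HE; rewrite !dinvE.
exact: (eq_count_except (cell_pairs_uniq (SYT_rcells_uniq HT)) UE sub).
Qed.
End Relabel.

Lemma neq_boolE (x y : bool) : x != y -> (x /\ ~~ y) \/ (~~ x /\ y).
Proof. by case: x; case: y; auto. Qed.

Lemma transp_flipped i j a b : j.+1 = i \/ j = i.+1 -> flipped (transp i j) a b ->
  (a = i /\ b = j) \/ (a = j /\ b = i).
Proof. by move=> Hij /neq_boolE; rewrite /transp; repeat case: eqP; lia. Qed.

Lemma rot3_flipped i m e a b : (m = i.-1 /\ e = i.+1) \/ (m = i.+1 /\ e = i.-1) -> 0 < i ->
  flipped (rot3 i m e) a b -> (a = m /\ (b = i \/ b = e)) \/ (b = m /\ (a = i \/ a = e)).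
Proof. by move=> Hme Hi /neq_boolE; rewrite /rot3; repeat case: eqP; lia. Qed.

Lemma rot3_count i m e a c : (m = i.-1 /\ e = i.+1) \/ (m = i.+1 /\ e = i.-1) -> 0 < i ->
  (a = i /\ c = e) \/ (a = e /\ c = i) ->
  (rot3 i m e m < rot3 i m e a) + (rot3 i m e c < rot3 i m e m) = (m < a) + (c < m).
Proof.
move=> [[-> ->]|[-> ->]] Hi [[-> ->]|[-> ->]]; rewrite /rot3; repeat case: eqP; try lia;
  move=> *; repeat case: ltnP; lia.
Qed.

Section ValueMoves.
Variables (sh : seq skew_shape) (T : filling).
Hypothesis HT : SYT sh T.
Local Notation sc := (shcontent (size sh)).

Lemma mem_rword_cell x : in_cells sh x -> T x \in rword sh T.
Proof. by rewrite -mem_rcells; apply: map_f. Qed.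

Lemma relabel_transp (xi xe : cell) i e : all is_skew_shape sh ->
  in_cells sh xi -> in_cells sh xe ->
  T xi = i -> T xe = e -> e.+1 = i \/ e = i.+1 -> (Posz (size sh) < `|sc xe - sc xi|)%R ->
  [/\ SYT sh (transp i e \o T), dDes sh (transp i e \o T) = dDes sh T &
      dinv sh (transp i e \o T) = dinv sh T].
Proof.
move=> Hall hi he Ti Te Hie far.
have Hgw x : x \in rword sh T -> transp i e x \in rword sh T.
  rewrite /transp; case: eqP => _; first by rewrite -Te mem_rword_cell.
  by case: eqP => // _; rewrite -Ti mem_rword_cell.
have moved x y : in_cells sh x -> in_cells sh y -> flipped (transp i e) (T x) (T y) ->
    (x = xi /\ y = xe) \/ (x = xe /\ y = xi).
  move=> hx hy /(transp_flipped Hie) [[ex ey]|[ex ey]]; [left|right];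
    by split; apply: (SYT_inj HT); rewrite ?ex ?ey ?Ti ?Te.
have adj : xi.1 = xe.1 -> xi.2.2 = xe.2.2 \/ xi.2.1 = xe.2.1 ->
    `|sc xe - sc xi|%R = Posz (size sh).
  move=> e1 e2; case: Hie => Hie.
    rewrite distrC; apply: (SYT_succ_line_adjacent Hall HT he hi); rewrite ?Ti ?Te //.
    by case: e2; auto.
  by apply: (SYT_succ_line_adjacent Hall HT hi he); rewrite ?Ti ?Te.
split.
- apply: (SYT_relabel HT (@transp_inj i e) Hgw) => x y hx hy /(moved x y hx hy).
  case=> -[-> ->] [e1 e2]; first by have := adj e1 e2; lia.
  by have := adj (esym e1) (ltac:(case: e2; auto)); lia.
- apply: dDes_relabel => x y hx hy /(moved y x hy hx) [[-> ->]|[-> ->]]; apply/eqP; lia.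
- apply: (dinv_relabel (E := [::]) HT) => // -[x y] /cell_pairsP [hx hy] _.
  case: (boolP (flipped (transp i e) (T y) (T x))) => [/(moved y x hy hx) | /negPn /eqP fixed].
    by case=> -[-> ->]; rewrite /dinv_pair /=; apply/idP/idP => /and3P [c1 c2 _]; lia.
  by rewrite /dinv_pair /= fixed.
Qed.

Lemma relabel_rot3 (xi xm xe : cell) i m e :
  in_cells sh xi -> in_cells sh xm -> in_cells sh xe -> 0 < i ->
  (m = i.-1 /\ e = i.+1) \/ (m = i.+1 /\ e = i.-1) -> T xi = i -> T xm = m -> T xe = e ->
  (sc xi < sc xm < sc xe)%R || (sc xe < sc xm < sc xi)%R ->
  (`|sc xe - sc xi| <= Posz (size sh))%R ->
  [/\ SYT sh (rot3 i m e \o T), dDes sh (rot3 i m e \o T) = dDes sh T &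
      dinv sh (rot3 i m e \o T) = dinv sh T].
Proof.
move=> hi hm he Hi Hme Ti Tm Te Hord Hwin.
have [x1 [x3 [h1 h3 T13 [s1m sm3 s13]]]] : exists x1 x3, [/\ in_cells sh x1, in_cells sh x3,
    (T x1 = i /\ T x3 = e) \/ (T x1 = e /\ T x3 = i) &
    [/\ sc x1 < sc xm, sc xm < sc x3 & sc x3 - sc x1 <= Posz (size sh)]%R].
  case/orP: Hord => /andP [s1 s2]; [exists xi, xe | exists xe, xi];
    by split; auto; split => //; move: s1 s2 Hwin; clear; lia.
have [im me ie] : [/\ i != m, m != e & i != e] by case: Hme => -[-> ->]; split; apply/eqP; lia.
have w_i : i \in rword sh T by case: T13 => [[<- _] | [_ <-]]; apply: mem_rword_cell.
have w_e : e \in rword sh T by case: T13 => [[_ <-] | [<- _]]; apply: mem_rword_cell.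
have w_m : m \in rword sh T by rewrite -Tm mem_rword_cell.
have Hg := rot3_inj im me ie.
have Hgw x : x \in rword sh T -> rot3 i m e x \in rword sh T.
  by rewrite /rot3; do 3 case: eqP => _ //.
have cell_ie y : in_cells sh y -> T y = i \/ T y = e -> y = x1 \/ y = x3.
  move=> hy Hy; case: T13 => -[T1 T3]; case: Hy => ey; [left|right|right|left];
    by apply: (SYT_inj HT); rewrite ?ey ?T1 ?T3.
have moved x y : in_cells sh x -> in_cells sh y -> flipped (rot3 i m e) (T x) (T y) ->
    (x = xm /\ (y = x1 \/ y = x3)) \/ (y = xm /\ (x = x1 \/ x = x3)).
  move=> hx hy /(rot3_flipped Hme Hi) [[ex ey]|[ey ex]]; [left|right]; split;
    by [apply: (SYT_inj HT); rewrite ?ex ?ey ?Tm | apply: cell_ie].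
split.
- apply: (SYT_relabel HT Hg Hgw) => x y hx hy fl [e1 e2].
  have ne : x != y by apply: contraTneq fl => ->; rewrite /flipped !ltnn.
  have := shcontent_line_far (size sh) ne e1 e2.
  by case: (moved x y hx hy fl) => -[-> [->|->]]; move: s1m sm3 s13; clear; lia.
- by apply: dDes_relabel => x y hx hy /(moved y x hy hx) [[-> [->|->]]|[-> [->|->]]];
    apply/eqP; move: s1m sm3 s13; clear; lia.
- have n1m : x1 != xm by apply: contraTneq s1m => ->; rewrite ltxx.
  apply: (dinv_relabel (E := [:: (x1, xm); (xm, x3)]) HT).
  + by rewrite /= inE andbT; apply: contra n1m => /eqP [-> _].
  + by move=> p; rewrite !inE => /orP [/eqP->|/eqP->]; apply: mem_cell_pairs.
  + case=> x y /cell_pairsP [hx hy] hn /=.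
    case: (boolP (flipped (rot3 i m e) (T y) (T x))) => [/(moved y x hy hx) | /negPn /eqP fixed];
      last by rewrite /dinv_pair /= fixed.
    case=> -[ey [ex|ex]]; subst x y.
    * by rewrite !inE eqxx in hn.
    * by rewrite /dinv_pair /= (_ : (0 < sc xm - sc x3)%R = false) //; move: sm3; clear; lia.
    * by rewrite /dinv_pair /= (_ : (0 < sc x1 - sc xm)%R = false) //; move: s1m; clear; lia.
    * by rewrite !inE eqxx orbT in hn.
  + rewrite /dinv_pair /=.
    have c1 : (0 < sc xm - sc x1)%R by move: s1m; clear; lia.
    have c2 : (sc xm - sc x1 < Posz (size sh))%R by move: s1m sm3 s13; clear; lia.
    have c3 : (0 < sc x3 - sc xm)%R by move: sm3; clear; lia.
    have c4 : (sc x3 - sc xm < Posz (size sh))%R by move: s1m sm3 s13; clear; lia.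
    rewrite c1 c2 c3 c4 /=.
    by rewrite Tm !addn0; case: T13 => -[-> ->]; apply: rot3_count; auto.
Qed.
End ValueMoves.

Lemma D_op_relabel sh T i : all is_skew_shape sh -> SYT sh T -> 1 < i < size (rcells sh) ->
  exists2 g : nat -> nat, D_word sh i (rword sh T) = map g (rword sh T) &
    [/\ SYT sh (g \o T), dDes sh (g \o T) = dDes sh T & dinv sh (g \o T) = dinv sh T].
Proof.
move=> Hall HT /andP [Hi1 Hin]; have Hi : 0 < i by lia.
have w1 : i.-1 \in rword sh T by apply: (SYT_mem_rword HT); lia.
have w2 : i \in rword sh T by apply: (SYT_mem_rword HT); lia.
have w3 : i.+1 \in rword sh T by apply: (SYT_mem_rword HT); lia.
case: (boolP (between (rword sh T) i)) => [B | nB].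
  by exists id; rewrite ?map_id ?D_word_between.
have [m [e Hc]] := end_config_exists Hi w1 w2 w3 nB.
have [Hme wi wm we Hmid] := Hc.
have [hi Ti] := word_cellP wi; have [hm Tm] := word_cellP wm; have [he Te] := word_cellP we.
rewrite (D_word_end_config sh (SYT_rword_uniq HT) Hi Hc) /word_shcontent.
set w := rword sh T in Hmid hi hm he Ti Tm Te *.
set xi := word_cell sh w i in hi Ti *; set xm := word_cell sh w m in hm Tm *.
set xe := word_cell sh w e in he Te *.
have ord u v : u \in [:: i; m; e] -> v \in [:: i; m; e] -> index u w < index v w ->
    (shcontent (size sh) (word_cell sh w u) < shcontent (size sh) (word_cell sh w v))%R.
  move=> hu hv huv; apply: (shcontent_lt_index Hall HT) => //.
  - by move: hu; rewrite !inE => /or3P [] /eqP ->.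
  - by move: hv; rewrite !inE => /or3P [] /eqP ->.
  - by move: Hi hu hv; rewrite !inE; case: Hme => -[-> ->]; clear; lia.
  - by move: Hi hu hv; rewrite !inE; case: Hme => -[-> ->]; clear; lia.
have Hord : (shcontent (size sh) xi < shcontent (size sh) xm < shcontent (size sh) xe)%R ||
            (shcontent (size sh) xe < shcontent (size sh) xm < shcontent (size sh) xi)%R.
  case/orP: Hmid => /andP [h1 h2]; apply/orP; [left | right];
    by apply/andP; split; apply: ord; rewrite ?inE ?eqxx ?orbT.
rewrite spread3_monotone //; case: ifP => B.
- exists (transp i e) => //; apply: (relabel_transp HT Hall hi he Ti Te) => //.
  by move: Hi; case: Hme => -[_ ->]; clear; lia.
- exists (rot3 i m e) => //; apply: (relabel_rot3 HT hi hm he Hi Hme Ti Tm Te Hord).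
  by rewrite leNgt B.
Qed.

Theorem proposition5p1 (k : nat) (sh : seq skew_shape) (n : nat) :
  1 <= k -> size sh = k -> all is_skew_shape sh ->
  n = size (rcells sh) ->
  forall (T : filling), SYT sh T ->
  forall i : nat, 1 < i < n ->
    [/\ SYT sh (D_op sh i T),
        dDes sh (D_op sh i T) = dDes sh T,
        dinv sh (D_op sh i T) = dinv sh T &
        (forall x, in_cells sh x -> D_op sh i (D_op sh i T) x = T x)].
Proof.
move=> _ _ Hall -> T HT i Hi.
have [g DW [S1 S2 S3]] := D_op_relabel Hall HT Hi.
have DE x : in_cells sh x -> D_op sh i T x = (g \o T) x.
  by move=> hx; rewrite D_opE DW of_word_map.
split.
- by apply: SYT_ext S1 => x /DE ->.
- by rewrite (dDes_ext DE) S2.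
- by rewrite (dinv_ext DE) S3.
- move: Hi => /andP [Hi1 Hin] x hx.
  have sizeD : size (D_word sh i (rword sh T)) = size (rcells sh) by rewrite DW !size_map.
  have Hw v : 0 < v <= size (rcells sh) -> v \in rword sh T by apply: SYT_mem_rword.
  rewrite !D_opE rword_of_word ?(SYT_rcells_uniq HT) //.
  rewrite D_word_involutive ?(SYT_rword_uniq HT) ?Hw; try lia.
  by rewrite of_word_rword ?(SYT_rcells_uniq HT).
Qed.
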